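(* Let $(\alpha_n)_{n\in\mathbb{N}^+}$ be a sequence in $(0,1)$ converging to $\alpha\in(0,1)$, with continued fraction expansions $\alpha_n=[0;a_{n1},a_{n2},\dots]$ and $\alpha=[0;a_1,a_2,\dots]$, and write $\alpha_n=[0;a_{n1},\dots,a_{ni},r_{ni}]$, $\alpha=[0;a_1,\dots,a_i,r_i]$. Suppose that for some $i\in\mathbb{N}^+$ the numbers $a_{n1},\dots,a_{ni}$ ($n\in\mathbb{N}^+$) are bounded, and that there are numbers $R_{i,\min},R_{i,\max}$ with $1<R_{i,\min}\le r_{ni}\le R_{i,\max}<\infty$ for all $n$. Then there is $n_0\in\mathbb{N}^+$ such that for each $1\le j\le i$, $a_{nj}$ is independent of $n$ for $n>n_0$, and $a_j=\lim_{\nu\to\infty}a_{\nu j}$; in particular $a_j=a_{nj}$ for all sufficiently large $n$.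
   Context: Continued fraction conventions: $[a_0;a_1,\dots,a_n]$ denotes $a_0+1/(a_1+1/(a_2+\cdots+1/a_n))$ with $a_0\in\mathbb{Z}$, $a_k\in\mathbb{N}^+$ for $1\le k<n$, and (for uniqueness) last element $a_n>1$. Every real number is identified with its unique continued fraction; a terminating expansion $[a_0;a_1,\dots,a_n]$ is also written as the nonterminating form $[a_0;a_1,\dots,a_n,0,0,\dots]$ (i.e. $a_i=0$ for $i>n$), with $[a_0;0,0,\dots]=a_0$. For $\alpha=[a_0;a_1,a_2,\dots]$ and $i\ge1$, the truncated form is $\alpha=[a_0;a_1,\dots,a_i,r_i]$ where $r_i:=a_{i+1}+[0;a_{i+2},a_{i+3},\dots]$. *)

From Stdlib Require Import Reals ZArith.
Open Scope R_scope.

(* Continued fraction expansion by the standard (Gauss) algorithm.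
   cf_quot x k = Some t_k, the k-th complete quotient of x:
     t_0 = x,  t_{k+1} = 1 / (t_k - floor t_k)  if t_k is not an integer;
   None once the expansion has terminated.  This produces exactly the unique
   expansion of the context (last element > 1 for terminating expansions). *)
Definition frac_part (t : R) : R := t - IZR (Int_part t).

Fixpoint cf_quot (x : R) (k : nat) : option R :=
  match k with
  | O => Some x
  | S k' =>
      match cf_quot x k' with
      | Some t => if Req_EM_T (frac_part t) 0 then None else Some (/ frac_part t)
      | None => None
      end
  end.

(* k-th partial quotient a_k of x = [a_0; a_1, a_2, ...]; a_k = 0 beyond the end
   of a terminating expansion. *)
Definition cf_digit (x : R) (k : nat) : Z :=
  match cf_quot x k with
  | Some t => Int_part t
  | None => 0%Z
  end.

(* r_i := a_{i+1} + [0; a_{i+2}, a_{i+3}, ...] ( = complete quotient t_{i+1};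
   equals 0 when the expansion terminated at an index <= i, consistently with
   the convention a_k = 0 and [0;0,0,...] = 0). *)
Definition cf_rem (x : R) (i : nat) : R :=
  match cf_quot x (S i) with
  | Some t => t
  | None => 0
  end.

(* All complete quotients t_1, ..., t_(i+1) of the alpha_n lie in a compact interval
   [c, C] with 1 < c, uniformly in n: t_(i+1) = r_(ni) by hypothesis, and for k <= i,
   t_k = a_k + 1/t_(k+1) with 1 <= a_k <= B.  Since frac t_k = 1/t_(k+1), the fractional
   parts of t_0, ..., t_i stay in [1/C, 1/c], away from 0 and 1.  Therefore, if
   t_k(alpha_n) -> t_k(alpha), then Int_part t_k(alpha_n) is eventually Int_part t_k(alpha),
   frac t_k(alpha) <> 0, and t_(k+1)(alpha_n) = 1/frac t_k(alpha_n) -> t_(k+1)(alpha).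
   Induction on k, starting from t_0 = alpha_n -> alpha, makes the first i+1 digits
   eventually constant and equal to those of alpha. *)
From Stdlib Require Import Reals ZArith Lra Lia.
Open Scope R_scope.

Lemma Int_part_bounds t : IZR (Int_part t) <= t < IZR (Int_part t) + 1.
Proof. destruct (base_Int_part t); lra. Qed.

Lemma Int_part_eq t z : IZR z <= t < IZR z + 1 -> Int_part t = z.
Proof. intros Hz; symmetry; apply Int_part_spec; lra. Qed.

Lemma frac_part_bounds t : 0 <= frac_part t < 1.
Proof. unfold frac_part; destruct (Int_part_bounds t); lra. Qed.

Lemma Un_cv_eventually_eq (u v : nat -> R) l N :
  (forall n, (N <= n)%nat -> u n = v n) -> Un_cv v l -> Un_cv u l.
Proof.
  intros Huv Hv e He; destruct (Hv e He) as [M HM].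
  exists (Nat.max N M); intros n Hn.
  rewrite Huv by lia; apply HM; lia.
Qed.

Lemma Un_cv_const l : Un_cv (fun _ => l) l.
Proof.
  intros e He; exists 0%nat; intros n _.
  unfold R_dist; rewrite Rminus_diag, Rabs_R0; lra.
Qed.

Section FracPartLimits.

Variables (x : nat -> R) (X lo hi : R).
Hypotheses (Hcv : Un_cv x X) (Hlo : 0 < lo) (Hhi : hi < 1).
Hypothesis Hfrac : forall n, (1 <= n)%nat -> lo <= frac_part (x n) <= hi.

(* Once |x_n - X| < min(lo, 1 - hi), X lies strictly inside the unit interval of x_n. *)
Lemma Int_part_eventually_eq :
  exists N, forall n, (N <= n)%nat ->
    Int_part (x n) = Int_part X /\ IZR (Int_part X) < X.
Proof.
  assert (He : 0 < Rmin lo (1 - hi)) by (apply Rmin_glb_lt; lra).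
  destruct (Hcv _ He) as [N HN]; exists (S N); intros n Hn.
  specialize (HN n ltac:(lia)); specialize (Hfrac n ltac:(lia)).
  unfold R_dist, frac_part in *; apply Rabs_def2 in HN.
  pose proof (Rmin_l lo (1 - hi)); pose proof (Rmin_r lo (1 - hi)).
  assert (E : Int_part X = Int_part (x n)) by (apply Int_part_eq; lra).
  rewrite E; split; [reflexivity | lra].
Qed.

Lemma frac_part_limit_neq0 : frac_part X <> 0.
Proof.
  destruct Int_part_eventually_eq as [N HN].
  destruct (HN N (le_n _)) as [_ HX]; unfold frac_part; lra.
Qed.

Lemma Un_cv_inv_frac_part :
  Un_cv (fun n => / frac_part (x n)) (/ frac_part X).
Proof.
  destruct Int_part_eventually_eq as [N HN].
  set (z := IZR (Int_part X)).
  apply Un_cv_eventually_eq with (v := fun n => / (x n - z)) (N := N).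
  { intros n Hn; unfold frac_part; rewrite (proj1 (HN n Hn)); reflexivity. }
  apply continuity_seq with (f := Rinv).
  - change (continuity_pt (/ id)%F (X - z)).
    apply continuity_pt_inv; [apply derivable_continuous_pt, derivable_pt_id |].
    exact frac_part_limit_neq0.
  - apply CV_minus; [exact Hcv | apply Un_cv_const].
Qed.

End FracPartLimits.

Definition cf_quot_val (x : R) (k : nat) : R :=
  match cf_quot x k with Some t => t | None => 0 end.

Lemma cf_quot_S_val x k : cf_quot x (S k) <> None ->
  cf_quot x k <> None /\ frac_part (cf_quot_val x k) <> 0 /\
  cf_quot_val x (S k) = / frac_part (cf_quot_val x k).
Proof.
  unfold cf_quot_val; simpl; destruct (cf_quot x k) as [t|]; [|congruence].
  destruct (Req_EM_T (frac_part t) 0); [congruence|].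
  intros _; split; [discriminate | auto].
Qed.

Lemma cf_quot_S_defined x k :
  cf_quot x k <> None -> frac_part (cf_quot_val x k) <> 0 ->
  cf_quot x (S k) <> None /\ cf_quot_val x (S k) = / frac_part (cf_quot_val x k).
Proof.
  unfold cf_quot_val; simpl; destruct (cf_quot x k) as [t|]; [|congruence].
  destruct (Req_EM_T (frac_part t) 0); [congruence|].
  intros _ _; split; [discriminate | reflexivity].
Qed.

Lemma cf_quot_defined_le x k m :
  (k <= m)%nat -> cf_quot x m <> None -> cf_quot x k <> None.
Proof. induction 1; auto; intros Hm; apply IHle, (cf_quot_S_val x m Hm). Qed.

Lemma cf_digit_val x k :
  cf_quot x k <> None -> cf_digit x k = Int_part (cf_quot_val x k).
Proof. unfold cf_digit, cf_quot_val; destruct (cf_quot x k); congruence. Qed.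

Definition cf_quot_ub (B : Z) (rmax : R) : R := rmax + Rabs (IZR B) + 1.

Definition cf_quot_lb (B : Z) (rmin rmax : R) : R :=
  Rmin rmin (1 + / cf_quot_ub B rmax).

Section UniformBounds.

Variables (x : R) (i : nat) (B : Z) (rmin rmax : R).
Hypothesis Hrmin : 1 < rmin.
Hypothesis Hrem : rmin <= cf_rem x i <= rmax.
Hypothesis Hdigit : forall j, (1 <= j <= i)%nat -> (cf_digit x j <= B)%Z.

Let t := cf_quot_val x.

Lemma cf_quot_defined k : (k <= S i)%nat -> cf_quot x k <> None.
Proof.
  intros Hk; apply (cf_quot_defined_le x k (S i) Hk); intros E.
  unfold cf_rem in Hrem; rewrite E in Hrem; lra.
Qed.

Lemma cf_quot_step k : (k <= i)%nat ->
  frac_part (t k) <> 0 /\ t (S k) = / frac_part (t k).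
Proof.
  intros Hk; destruct (cf_quot_S_val x k) as [_ H]; [apply cf_quot_defined; lia | exact H].
Qed.

Lemma cf_quot_gt1 k : (1 <= k <= S i)%nat -> 1 < t k.
Proof.
  intros Hk; destruct k as [|k]; [lia|].
  destruct (cf_quot_step k ltac:(lia)) as [Hf ->].
  destruct (frac_part_bounds (t k)).
  rewrite <- Rinv_1; apply Rinv_lt_contravar; lra.
Qed.

Lemma cf_digit_bounds k : (1 <= k <= i)%nat ->
  1 <= IZR (Int_part (t k)) <= IZR B.
Proof.
  intros Hk; pose proof (cf_quot_gt1 k ltac:(lia)); destruct (Int_part_bounds (t k)).
  assert (Hpos : (0 < Int_part (t k))%Z) by (apply lt_0_IZR; lra).
  split; apply IZR_le; [lia|].
  unfold t; rewrite <- cf_digit_val by (apply cf_quot_defined; lia); auto.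
Qed.

Lemma cf_quot_le_ub k : (1 <= k <= S i)%nat -> t k <= cf_quot_ub B rmax.
Proof.
  intros Hk; unfold cf_quot_ub; pose proof (Rabs_pos (IZR B)).
  destruct (Nat.eq_dec k (S i)) as [->|Hne]; [unfold t, cf_quot_val; unfold cf_rem in Hrem; lra|].
  pose proof (cf_digit_bounds k ltac:(lia)); pose proof (RRle_abs (IZR B)).
  destruct (Int_part_bounds (t k)); lra.
Qed.

Lemma cf_quot_ub_ge1 : 1 <= cf_quot_ub B rmax.
Proof. unfold cf_quot_ub; pose proof (Rabs_pos (IZR B)); lra. Qed.

(* For k <= i, t_k = a_k + 1/t_(k+1) >= 1 + 1/cf_quot_ub. *)
Lemma cf_quot_ge_lb k : (1 <= k <= S i)%nat -> cf_quot_lb B rmin rmax <= t k.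
Proof.
  intros Hk; unfold cf_quot_lb.
  destruct (Nat.eq_dec k (S i)) as [->|Hne].
  - pose proof (Rmin_l rmin (1 + / cf_quot_ub B rmax)).
    unfold t, cf_quot_val; unfold cf_rem in Hrem; lra.
  - pose proof (Rmin_r rmin (1 + / cf_quot_ub B rmax)).
    pose proof (cf_digit_bounds k ltac:(lia)).
    destruct (cf_quot_step k ltac:(lia)) as [Hf Ht].
    pose proof (cf_quot_gt1 (S k) ltac:(lia)); pose proof (cf_quot_le_ub (S k) ltac:(lia)).
    assert (Hinv : / cf_quot_ub B rmax <= frac_part (t k)).
    { rewrite <- (Rinv_inv (frac_part (t k))), <- Ht; apply Rinv_le_contravar; lra. }
    unfold frac_part in Hinv; lra.
Qed.

Lemma cf_quot_lb_gt1 : 1 < cf_quot_lb B rmin rmax.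
Proof.
  unfold cf_quot_lb; apply Rmin_glb_lt; [exact Hrmin|].
  pose proof cf_quot_ub_ge1; assert (0 < / cf_quot_ub B rmax) by (apply Rinv_0_lt_compat; lra).
  lra.
Qed.

Lemma cf_frac_part_bounds k : (k <= i)%nat ->
  / cf_quot_ub B rmax <= frac_part (t k) <= / cf_quot_lb B rmin rmax.
Proof.
  intros Hk; destruct (cf_quot_step k Hk) as [Hf Ht].
  pose proof cf_quot_lb_gt1; pose proof (cf_quot_gt1 (S k) ltac:(lia)).
  pose proof (cf_quot_le_ub (S k) ltac:(lia)); pose proof (cf_quot_ge_lb (S k) ltac:(lia)).
  rewrite <- (Rinv_inv (frac_part (t k))), <- Ht.
  split; apply Rinv_le_contravar; lra.
Qed.

End UniformBounds.

Lemma cf_quot_val_cv (x : nat -> R) (X : R) (i : nat) (lo hi : R) :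
  0 < lo -> hi < 1 -> Un_cv x X ->
  (forall n, (1 <= n)%nat -> cf_quot (x n) (S i) <> None) ->
  (forall n k, (1 <= n)%nat -> (k <= i)%nat -> lo <= frac_part (cf_quot_val (x n) k) <= hi) ->
  forall k, (k <= S i)%nat ->
    cf_quot X k <> None /\
    Un_cv (fun n => cf_quot_val (x n) k) (cf_quot_val X k) /\
    exists N, forall n j, (N <= n)%nat -> (j < k)%nat -> cf_digit (x n) j = cf_digit X j.
Proof.
  intros Hlo Hhi Hcv Hdef Hfrac.
  induction k as [|k IH]; intros Hk.
  { split; [discriminate|]; split; [exact Hcv|]; exists 0%nat; intros; lia. }
  destruct (IH ltac:(lia)) as [HX [Hcvk [N HN]]].
  pose proof (fun n Hn => Hfrac n k Hn ltac:(lia)) as Hfk.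
  destruct (Int_part_eventually_eq _ _ _ _ Hcvk Hlo Hhi Hfk) as [M HM].
  destruct (cf_quot_S_defined X k HX (frac_part_limit_neq0 _ _ _ _ Hcvk Hlo Hhi Hfk))
    as [HXS ->].
  split; [exact HXS|]; split.
  - apply Un_cv_eventually_eq
      with (v := fun n => / frac_part (cf_quot_val (x n) k)) (N := 1%nat).
    + intros n Hn; apply (cf_quot_S_val (x n) k), cf_quot_defined_le with (m := S i);
        auto; lia.
    + exact (Un_cv_inv_frac_part _ _ _ _ Hcvk Hlo Hhi Hfk).
  - exists (S (Nat.max N M)); intros n j Hn Hj.
    destruct (Nat.eq_dec j k) as [->|Hne]; [|apply HN; lia].
    assert (Hxn : cf_quot (x n) k <> None)
      by (apply cf_quot_defined_le with (m := S i); [lia | apply Hdef; lia]).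
    rewrite !cf_digit_val by assumption.
    apply HM; lia.
Qed.

Theorem lemma1 (alpha_ : nat -> R) (alpha : R) (i : nat) (Rmin Rmax : R) :
  (forall n : nat, (1 <= n)%nat -> 0 < alpha_ n < 1) ->
  0 < alpha < 1 ->
  Un_cv alpha_ alpha ->
  (1 <= i)%nat ->
  (exists B : Z, forall n j : nat, (1 <= n)%nat -> (1 <= j <= i)%nat ->
       (cf_digit (alpha_ n) j <= B)%Z) ->
  1 < Rmin ->
  (forall n : nat, (1 <= n)%nat -> Rmin <= cf_rem (alpha_ n) i <= Rmax) ->
  exists n0 : nat, (1 <= n0)%nat /\
    forall j : nat, (1 <= j <= i)%nat ->
      (forall n m : nat, (n > n0)%nat -> (m > n0)%nat ->
          cf_digit (alpha_ n) j = cf_digit (alpha_ m) j) /\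
      Un_cv (fun nu => IZR (cf_digit (alpha_ nu) j)) (IZR (cf_digit alpha j)) /\
      (forall n : nat, (n > n0)%nat -> cf_digit alpha j = cf_digit (alpha_ n) j).
Proof.
  intros _ _ Hcv _ [B HB] Hmin Hrem.
  pose proof (cf_quot_ub_ge1 (alpha_ 1%nat) i B Rmin Rmax Hmin (Hrem 1%nat (le_n _))).
  pose proof (cf_quot_lb_gt1 (alpha_ 1%nat) i B Rmin Rmax Hmin (Hrem 1%nat (le_n _))).
  destruct (cf_quot_val_cv alpha_ alpha i (/ cf_quot_ub B Rmax) (/ cf_quot_lb B Rmin Rmax))
    with (k := S i) as [_ [_ [N HN]]]; auto.
  - apply Rinv_0_lt_compat; lra.
  - rewrite <- Rinv_1; apply Rinv_lt_contravar; lra.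
  - intros n Hn; apply (cf_quot_defined (alpha_ n) i Rmin Rmax); auto.
  - intros n k Hn Hk; apply (cf_frac_part_bounds (alpha_ n) i B Rmin Rmax); auto.
  - exists (S N); split; [lia|]; intros j Hj.
    assert (Heq : forall n, (n > S N)%nat -> cf_digit (alpha_ n) j = cf_digit alpha j)
      by (intros n Hn; apply HN; lia).
    split; [|split].
    + intros n m Hn Hm; rewrite (Heq n Hn), (Heq m Hm); reflexivity.
    + apply Un_cv_eventually_eq with (v := fun _ => IZR (cf_digit alpha j)) (N := S (S N)).
      * intros n Hn; rewrite Heq by lia; reflexivity.
      * apply Un_cv_const.
    + intros n Hn; symmetry; apply Heq, Hn.
Qed.
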